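(* For $j\in\{0,1,2,3\}$ let $$\mathcal{F}_j(\tau)=\sum_{\Delta\ge0}c\Big(\frac{\Delta+j^2}{8},j\Big)q^{\Delta/8},$$ where $c(n,r)=0$ unless $n\in\mathbb{N}_0$, in which case $c(n,r)=\sum_{d\mid\gcd(n,r,2),\,d>0}d\,H\big(\frac{8n-r^2}{d^2}\big)$. Define $\beta_0(n),\beta_1(n)$ by $\frac{4800}{\eta(\tau)^6}\mathcal{F}_j(\tau)=\sum_{n\ge0}\beta_j(n)q^{n-\alpha_j}$ with $\alpha_0=\frac14$, $\alpha_1=\frac38$; let $\mathcal{H}_1(\tau)=\sum_{n\ge0}H(4n+3)q^{n+\frac34}$ and define $\gamma(n)$ by $\frac{4800}{\eta(\tau)^6}\mathcal{H}_1(\tau)=\sum_{n\ge0}\gamma(n)q^{n-\frac12}$; and let $p_6(n)$ be defined by $\sum_{n\ge0}p_6(n)q^n=\prod_{\ell\ge1}(1-q^\ell)^{-6}$. Then for all integers $n\ge0$, $$-\beta_0(n)\le1200\,p_6(n),\qquad \beta_1(n)\le\gamma(2n).$$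
   Context: $q=e^{2\pi i\tau}$, $\eta(\tau)=q^{1/24}\prod_{n\ge1}(1-q^n)$. For an integer $N$, $H(N)$ is the Hurwitz–Kronecker class number: $H(0)=-1/12$; $H(N)=0$ if $N<0$ or $N\equiv1,2\pmod4$; for $N>0$, $N\equiv0,3\pmod4$, $H(N)$ is the number of $\mathrm{SL}_2(\mathbb{Z})$-classes of positive definite integral binary quadratic forms of discriminant $-N$, classes of forms equivalent to a multiple of $x^2+y^2$ (resp. $x^2+xy+y^2$) weighted by $1/2$ (resp. $1/3$). $p_6(n)$ is the number of partitions of $n$ into parts of $6$ colors. *)

From Stdlib Require Import ClassicalEpsilon.
From mathcomp Require Import all_boot all_order all_algebra.
Set Implicit Arguments. Unset Strict Implicit. Unset Printing Implicit Defensive.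
Import Order.TTheory GRing.Theory Num.Theory.
Local Open Scope ring_scope.

(* A binary quadratic form a x^2 + b x y + c y^2 with integer coefficients. *)
Definition form := (int * int * int)%type.
Definition fa (f : form) : int := f.1.1.
Definition fb (f : form) : int := f.1.2.
Definition fc (f : form) : int := f.2.

Definition disc (f : form) : int := fb f ^+ 2 - 4 * fa f * fc f.

Definition posdef (f : form) : Prop := 0 < fa f /\ disc f < 0.

(* f transformed by gamma = [[p,q],[r,s]] : f(p x + q y, r x + s y) *)
Definition act (f : form) (p q r s : int) : form :=
  (fa f * p ^+ 2 + fb f * p * r + fc f * r ^+ 2,
   2 * fa f * p * q + fb f * (p * s + q * r) + 2 * fc f * r * s,
   fa f * q ^+ 2 + fb f * q * s + fc f * s ^+ 2).

Definition sl2_equiv (f g : form) : Prop :=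
  exists p q r s : int, p * s - q * r = 1 /\ g = act f p q r s.

Definition class_weight (f : form) : rat :=
  if excluded_middle_informative (exists k : int, sl2_equiv f (k, 0, k)) then 1 / 2
  else if excluded_middle_informative (exists k : int, sl2_equiv f (k, k, k)) then 1 / 3
  else 1.

Definition class_reps (N : int) (s : seq form) : Prop :=
  (forall f, f \in s -> posdef f /\ disc f = - N) /\
  (forall i j : nat, (i < j < size s)%N -> ~ sl2_equiv (nth (0,0,0) s i) (nth (0,0,0) s j)) /\
  (forall g, posdef g -> disc g = - N -> exists2 f, f \in s & sl2_equiv f g).

Definition reps (N : int) : seq form :=
  epsilon (inhabits [::]) (class_reps N).

Definition H (N : int) : rat :=
  if N == 0 then - (1 / 12)
  else if N < 0 then 0
  else if ((N %% 4)%Z == 1) || ((N %% 4)%Z == 2) then 0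
  else \sum_(f <- reps N) class_weight f.

Definition is_nat_rat (x : rat) : bool := (denq x == 1) && (0 <= numq x).

Definition cnr (n : rat) (r : int) : rat :=
  if is_nat_rat n then
    let m := numq n in
    \sum_(d <- divisors (gcdn (gcdn `|m|%N `|r|%N) 2))
       d%:R * H (((8 * m - r ^+ 2) %/ (d ^ 2)%:Z)%Z)
  else 0.

Definition Fcoef (j : int) (Delta : nat) : rat :=
  cnr ((Delta%:R + (j ^+ 2)%:~R) / 8) j.

(* p_6(n): number of partitions of n into parts of 6 colours, i.e. multiplicity
   functions (colour, part size i.+1) |-> multiplicity with total weight n *)
Definition p6 (n : nat) : nat :=
  #|[set f : {ffun 'I_6 * 'I_n -> 'I_n.+1} |
       (\sum_(i : 'I_6 * 'I_n) (i.2.+1 * f i)%N == n)%N]|.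

(* 4800/eta^6 * F_j = 4800 q^(-1/4) (sum_m p6 m q^m) (sum_Delta Fcoef j Delta q^(Delta/8));
   beta_j(n) = coefficient of q^(n - alpha) *)
Definition beta (j : int) (alpha : rat) (n : nat) : rat :=
  4800 * \sum_(m < n.+1)
     (p6 m)%:R *
     (let D : rat := 8 * (n%:R - alpha + 1 / 4 - m%:R) in
      if is_nat_rat D then Fcoef j `|numq D|%N else 0).

Definition beta0 := beta 0 (1 / 4).
Definition beta1 := beta 1 (3 / 8).

(* 4800/eta^6 * H_1, H_1 = sum_k H(4k+3) q^(k+3/4); gamma(n) = coeff of q^(n - 1/2) *)
Definition gamma (n : nat) : rat :=
  4800 * \sum_(m < n.+1)
     (p6 m)%:R *
     (let K : rat := n%:R - 1 / 2 + 1 / 4 - m%:R - 3 / 4 in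
      if is_nat_rat K then H (4 * numq K + 3) else 0).

From Stdlib Require Import ClassicalEpsilon.
From mathcomp Require Import all_boot all_order all_algebra.
From mathcomp Require Import lra zify.
Import Order.TTheory GRing.Theory Num.Theory.
Local Open Scope ring_scope.

(* Expanding 1/eta^6 = q^(-1/4) sum p6(m) q^m, both inequalities are termwise.
   All class numbers H(N) with N <> 0 are nonnegative, so the only negative
   contribution to beta_0(n) is the constant term c(0,0) = 3 H(0) = -1/4 of
   F_0, weighted by p6(n); this gives -beta_0(n) <= 4800 p6(n) / 4.  The
   coefficient of q^(k - 1/8) in F_1 is c(k,1) = H(8k-1), which also occurs in
   H_1 as the coefficient of q^(2k - 1/4); hence beta_1(n) and gamma(2n) are
   sums of the same nonnegative class numbers, weighted by p6(m) and p6(2m)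
   respectively, and p6 is nondecreasing. *)

Lemma is_nat_rat_nat (k : nat) : is_nat_rat k%:R.
Proof. by rewrite /is_nat_rat pmulrn numq_int denq_int eqxx. Qed.

Lemma numq_nat (k : nat) : numq (k%:R : rat) = k%:Z.
Proof. by rewrite pmulrn numq_int. Qed.

Lemma H_ge0 (N : int) : N != 0 -> 0 <= H N.
Proof.
rewrite /H => /negbTE ->; case: ifP => // _; case: ifP => // _.
apply: sumr_ge0 => f _; rewrite /class_weight.
by do 2 case: excluded_middle_informative.
Qed.

Lemma cnr00 : cnr 0 0 = - (1 / 4).
Proof.
rewrite /cnr (is_nat_rat_nat 0) /=.
have -> : divisors 2 = [:: 1; 2]%N by [].
by rewrite big_cons big_seq1 !divz_nat /H eqxx.
Qed.

(* The divisors d in c(k, r) satisfy d^2 <= 4, so no argument of H vanishes. *)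
Lemma cnr_ge0 (k : nat) (r : int) : r ^+ 2 + 4 <= 8 * k%:Z -> 0 <= cnr k%:R r.
Proof.
move=> r2_lt; rewrite /cnr is_nat_rat_nat numq_nat /= big_seq.
apply: sumr_ge0 => d; set g := gcdn _ 2.
have g_gt0 : (0 < g)%N by rewrite gcdn_gt0 orbT.
rewrite -dvdn_divisors // => d_dvd_g.
have d_gt0 : (0 < d)%N := dvdn_gt0 g_gt0 d_dvd_g.
have d_le2 : (d <= 2)%N := dvdn_leq (isT : 0 < 2)%N (dvdn_trans d_dvd_g (dvdn_gcdr _ _)).
have d2_le4 : (d ^ 2 <= 2 ^ 2)%N by rewrite leq_exp2r.
rewrite mulr_ge0 ?ler0n // H_ge0 //; lia.
Qed.

Lemma cnr1 (k : nat) : cnr k%:R 1 = H (8 * k%:Z - 1).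
Proof.
rewrite /cnr is_nat_rat_nat numq_nat gcdn1.
by rewrite (_ : divisors 1 = [:: 1%N]) // big_seq1 mul1r expr1n divz1.
Qed.

Lemma Fcoef0_mul8 (k : nat) : Fcoef 0 (8 * k) = cnr k%:R 0.
Proof. by rewrite /Fcoef expr0n addr0 natrM mulrC mulKf. Qed.

Lemma Fcoef1_mul8_pred (k : nat) : (0 < k)%N -> Fcoef 1 (8 * k).-1 = cnr k%:R 1.
Proof.
move=> k_gt0; rewrite /Fcoef expr1n -subn1 natrB ?muln_gt0 // subrK.
by rewrite natrM mulrC mulKf.
Qed.

Definition colored_partitions (c n : nat) : nat :=
  #|[set f : {ffun 'I_c * 'I_n -> 'I_n.+1} |
       (\sum_(i : 'I_c * 'I_n) (i.2.+1 * f i)%N == n)%N]|.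

Section AddPartOne.
Variables c m : nat.
Implicit Type f : {ffun 'I_c.+1 * 'I_m -> 'I_m.+1}.

(* The multiplicity function of a partition of m, viewed as one of m + 1 that
   allows parts of size m + 1 (with multiplicity 0). *)
Definition widen_mult f (p : 'I_c.+1 * 'I_m.+1) : nat :=
  if insub (val p.2) is Some j then val (f (p.1, j)) else 0%N.

Lemma widen_mult_le f p : (widen_mult f p <= m)%N.
Proof. by rewrite /widen_mult; case: insub => // j; rewrite -ltnS ltn_ord. Qed.

Let part1 : 'I_c.+1 * 'I_m.+1 := (ord0, ord0).

(* Adding one part of size 1 and colour 0. *)
Definition add_part1 f : {ffun 'I_c.+1 * 'I_m.+1 -> 'I_m.+2} :=
  [ffun p => inord (widen_mult f p + (p == part1))%N].

Lemma add_part1E f p : val (add_part1 f p) = (widen_mult f p + (p == part1))%N.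
Proof.
rewrite ffunE /= inordK // ltnS; have := widen_mult_le f p.
by case: (p == part1); rewrite ?addn1 ?addn0 // => /leq_trans->.
Qed.

Lemma add_part1_inj : injective add_part1.
Proof.
move=> f1 f2 eq_f; apply/ffunP => -[col j]; apply: val_inj.
have := congr1 (fun g : {ffun _ -> _} => val (g (col, widen_ord (leqnSn m) j))) eq_f.
by rewrite !add_part1E /widen_mult /= valK => /addIn.
Qed.

Lemma add_part1_weight f :
  (\sum_(i : 'I_c.+1 * 'I_m.+1) i.2.+1 * add_part1 f i =
   \sum_(i : 'I_c.+1 * 'I_m) i.2.+1 * f i + 1)%N.
Proof.
under eq_bigr => i _ do rewrite add_part1E mulnDr.
rewrite big_split /=; congr addn.
  rewrite -(pair_bigA _ (fun col (j : 'I_m.+1) => j.+1 * widen_mult f (col, j)))%N.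
  rewrite (eq_bigr (fun p : 'I_c.+1 * 'I_m => p.2.+1 * f (p.1, p.2))%N); last by case.
  rewrite -(pair_bigA _ (fun col (j : 'I_m) => j.+1 * f (col, j)))%N.
  apply: eq_bigr => col _; rewrite big_ord_recr /= /widen_mult insubF ?ltnn //.
  by rewrite muln0 addn0; apply: eq_bigr => j _; rewrite /= valK.
rewrite (bigD1 part1) // eqxx big1 ?addn0 // => p /andP[_ /negbTE->].
by rewrite muln0.
Qed.

Lemma colored_partitionsS :
  (colored_partitions c.+1 m <= colored_partitions c.+1 m.+1)%N.
Proof.
rewrite /colored_partitions -(card_in_imset (f := add_part1)).
  apply/subset_leq_card/subsetP => _ /imsetP[f f_wt ->].
  by rewrite inE in f_wt; rewrite inE add_part1_weight (eqP f_wt) addn1.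
by move=> f1 f2 _ _; apply: add_part1_inj.
Qed.

End AddPartOne.

Lemma colored_partitions_mono (c : nat) :
  {homo colored_partitions c.+1 : m n / (m <= n)%N}.
Proof.
move=> m n /subnK <-; elim: (n - m)%N => // d IH.
exact: leq_trans IH (colored_partitionsS _ _).
Qed.

Lemma p6_mono : {homo p6 : m n / (m <= n)%N}.
Proof. exact: colored_partitions_mono. Qed.

Lemma ler_sum_even (R : numDomainType) (b : nat -> R) :
  (forall m, 0 <= b m) ->
  forall n, \sum_(i < n) b (2 * i)%N <= \sum_(m < 2 * n) b m.
Proof.
move=> b_ge0; elim=> [|n IH]; first by rewrite !big_ord0.
rewrite big_ord_recr mulnS !big_ord_recr /= -addrA lerD //.
by rewrite lerDl.
Qed.

Lemma beta0E (n : nat) :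
  beta0 n = 4800 * \sum_(m < n.+1) (p6 m)%:R * cnr (n - m)%N%:R 0.
Proof.
congr (_ * _); apply: eq_bigr => m _; congr (_ * _).
have -> : 8 * (n%:R - 1 / 4 + 1 / 4 - m%:R) = (8 * (n - m))%N%:R :> rat.
  by rewrite subrK natrM natrB // -ltnS.
by cbv zeta; rewrite is_nat_rat_nat numq_nat Fcoef0_mul8.
Qed.

Lemma beta1_coef (n m : nat) : (m <= n)%N ->
  (if is_nat_rat (8 * (n%:R - 3 / 8 + 1 / 4 - m%:R))
   then Fcoef 1 `|numq (8 * (n%:R - 3 / 8 + 1 / 4 - m%:R))|%N else 0)
  = if (m < n)%N then H (8 * (n - m)%N%:Z - 1) else 0.
Proof.
rewrite leq_eqVlt => /predU1P[-> | m_lt_n].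
  have -> : 8 * (n%:R - 3 / 8 + 1 / 4 - n%:R) = -1 :> rat.
    by set k : rat := n%:R; lra.
  by rewrite ltnn.
have k_gt0 : (0 < n - m)%N by rewrite subn_gt0.
have -> : 8 * (n%:R - 3 / 8 + 1 / 4 - m%:R) = (8 * (n - m)).-1%N%:R :> rat.
  rewrite -subn1 natrB ?muln_gt0 // natrM natrB 1?ltnW //.
  by set k : rat := n%:R; set l : rat := m%:R; lra.
by rewrite m_lt_n is_nat_rat_nat numq_nat Fcoef1_mul8_pred // cnr1.
Qed.

Lemma beta1E (n : nat) :
  beta1 n = 4800 * \sum_(m < n) (p6 m)%:R * H (8 * (n - m)%N%:Z - 1).
Proof.
rewrite /beta1 /beta; congr (_ * _).
rewrite (eq_bigr (fun m : 'I_n.+1 =>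
  (p6 m)%:R * if (m < n)%N then H (8 * (n - m)%N%:Z - 1) else 0)); last first.
  by move=> m _; rewrite beta1_coef // -ltnS.
by rewrite big_ord_recr /= ltnn mulr0 addr0; apply: eq_bigr => m _; rewrite ltn_ord.
Qed.

Lemma gamma_coef_ge0 (N m : nat) :
  0 <= if is_nat_rat (N%:R - 1 / 2 + 1 / 4 - m%:R - 3 / 4)
       then H (4 * numq (N%:R - 1 / 2 + 1 / 4 - m%:R - 3 / 4) + 3) else 0.
Proof. by case: ifP => // /andP[_ K_ge0]; rewrite H_ge0 //; lia. Qed.

Lemma gamma_coef_even (n m : nat) : (m < n)%N ->
  (if is_nat_rat ((2 * n)%N%:R - 1 / 2 + 1 / 4 - (2 * m)%N%:R - 3 / 4)
   then H (4 * numq ((2 * n)%N%:R - 1 / 2 + 1 / 4 - (2 * m)%N%:R - 3 / 4) + 3)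
   else 0) = H (8 * (n - m)%N%:Z - 1).
Proof.
move=> m_lt_n; have k_gt0 : (0 < n - m)%N by rewrite subn_gt0.
have -> : (2 * n)%N%:R - 1 / 2 + 1 / 4 - (2 * m)%N%:R - 3 / 4 =
          (2 * (n - m)).-1%N%:R :> rat.
  rewrite -subn1 natrB ?muln_gt0 // !natrM natrB 1?ltnW //.
  by set k : rat := n%:R; set l : rat := m%:R; lra.
by rewrite is_nat_rat_nat numq_nat; congr H; rewrite -subn1; lia.
Qed.

Lemma gamma_even_ge (n : nat) :
  4800 * \sum_(m < n) (p6 (2 * m))%:R * H (8 * (n - m)%N%:Z - 1) <= gamma (2 * n).
Proof.
rewrite /gamma ler_wpM2l //.
pose g (m : nat) : rat := (p6 m)%:R *
  if is_nat_rat ((2 * n)%N%:R - 1 / 2 + 1 / 4 - m%:R - 3 / 4)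
  then H (4 * numq ((2 * n)%N%:R - 1 / 2 + 1 / 4 - m%:R - 3 / 4) + 3) else 0.
have g_ge0 m : 0 <= g m by rewrite mulr_ge0 ?ler0n ?gamma_coef_ge0.
apply: le_trans (_ : \sum_(m < 2 * n) g m <= _); last first.
  by rewrite -[X in _ <= X]/(\sum_(m < (2 * n).+1) g m) big_ord_recr lerDl.
apply: le_trans (ler_sum_even _ _ g_ge0 n).
by apply: ler_sum => m _; rewrite /g gamma_coef_even.
Qed.

Theorem lemma5p2 (n : nat) :
  - beta0 n <= 1200 * (p6 n)%:R /\ beta1 n <= gamma (2 * n)%N.
Proof.
split.
  rewrite beta0E big_ord_recr /= subnn cnr00.
  have : 0 <= \sum_(m < n) (p6 m)%:R * cnr (n - m)%N%:R 0 :> rat.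
    apply: sumr_ge0 => m _; rewrite mulr_ge0 ?ler0n // cnr_ge0 //.
    by have := ltn_ord m; lia.
  lra.
rewrite beta1E; apply: le_trans (gamma_even_ge n); rewrite ler_wpM2l //.
apply: ler_sum => m _; rewrite ler_wpM2r ?ler_nat ?p6_mono ?leq_pmull //.
by rewrite H_ge0 //; have := ltn_ord m; lia.
Qed.
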